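(* Let $G$ be a compact group with identity $e$, let $A \subset G$ with $A = A^{-1}$ and $e \in A$, and let $\pi_0 = 1, \pi_1, \dots, \pi_m$ be pairwise distinct (non-isomorphic) irreducible unitary representations of $G$, realized as matrix-valued maps $\pi_i : G \to U(\dim \pi_i)$, with $\pi_0$ the trivial representation. Define \[ B_{\{1,\pi_1,\dots,\pi_m\}}(G,A) = \inf\Big\{ 1 + \sum_{i=1}^m \mathrm{tr}(\bm X_i) \;:\; \bm X_i \in \mathcal{S}^+_{\dim(\pi_i)} \text{ for } i \in [m],\; 1 + \sum_{i=1}^m \mathrm{tr}(\pi_i(g)\bm X_i^\top) \leq 0 \text{ for all } g \in A^c \Big\}, \] where $\mathcal{S}^+_\ell$ is the cone of $\ell \times \ell$ complex positive semidefinite matrices. If $\mu$ is a probability measure on $G$ with $\mathrm{supp}(\mu) \subseteq \overline{A^c}$ and $c > 0$ is such that $\widehat{\mu}(\pi_i) = \int \pi_i(g)\, d\mu(g) \succeq -c \bm I$ for all $i \in [m]$, then \[ B_{\{1,\pi_1,\dots,\pi_m\}}(G,A) \geq 1 + \frac{1}{c}. \]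
   Context: $A^c$ denotes the complement of $A$ in $G$ and $\overline{A^c}$ its closure; $\succeq$ is the positive semidefinite order; $[m] = \{1,\dots,m\}$. *)

From HB Require Import structures.
From mathcomp Require Import all_boot all_order all_algebra.
From mathcomp Require Import all_classical all_reals all_analysis.
From mathcomp.real_closed Require Import complex.
Set Implicit Arguments. Unset Strict Implicit. Unset Printing Implicit Defensive.
Import Order.TTheory GRing.Theory Num.Theory numFieldNormedType.Exports.
Local Open Scope ring_scope.
Local Open Scope classical_set_scope.

Definition compact_group (T : ptopologicalType) (mul : T -> T -> T)
    (inv : T -> T) (e : T) : Prop :=
  [/\ (forall x y z, mul x (mul y z) = mul (mul x y) z),
      (forall x, mul e x = x /\ mul x e = x) &
      (forall x, mul (inv x) x = e /\ mul x (inv x) = e)] /\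
  [/\ continuous (fun p : T * T => mul p.1 p.2),
      continuous inv,
      hausdorff_space T &
      compact [set: T]].

Definition borel_of (T : ptopologicalType) := g_sigma_algebraType (@open T).

Definition msupport (R : realType) (T : ptopologicalType)
    (mu : set (borel_of T) -> \bar R) : set T :=
  [set x : T | forall U : set T, open U -> U x -> (0 < mu U)%E].

Definition adjmx (R : rcfType) (n p : nat) (M : 'M[R[i]]_(n, p)) : 'M[R[i]]_(p, n) :=
  (map_mx (@conjc R) M)^T.

Definition psd (R : rcfType) (n : nat) (M : 'M[R[i]]_n) : Prop :=
  adjmx M = M /\ forall v : 'rV[R[i]]_n, 0 <= (v *m M *m adjmx v) 0 0.

Definition unitary_rep (R : realType) (T : ptopologicalType) (mul : T -> T -> T)
    (n : nat) (p : T -> 'M[R[i]]_n) : Prop :=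
  [/\ (forall g h, p (mul g h) = p g *m p h),
      (forall g, p g *m adjmx (p g) = 1%:M) &
      (forall j k, continuous (fun g : T => (complex.Re (p g j k) : R)) /\
                   continuous (fun g : T => (complex.Im (p g j k) : R)))].

Definition irreducible_rep (R : realType) (T : ptopologicalType) (n : nat)
    (p : T -> 'M[R[i]]_n) : Prop :=
  (0 < n)%N /\
  forall U : 'M[R[i]]_n, (forall g, (U *m p g <= U)%MS) -> (U == (0 : 'M[R[i]]_n))%MS || (U == (1%:M : 'M[R[i]]_n))%MS.

Definition rep_iso (R : realType) (T : ptopologicalType) (n1 n2 : nat)
    (p1 : T -> 'M[R[i]]_n1) (p2 : T -> 'M[R[i]]_n2) : Prop :=
  exists P : 'M[R[i]]_(n1, n2),
    [/\ row_free P, row_full P & forall g, p1 g *m P = P *m p2 g].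

Definition cintegral (R : realType) (T : ptopologicalType)
    (mu : {measure set (borel_of T) -> \bar R}) (f : T -> R[i]) : R[i] :=
  (Rintegral mu setT (fun g : borel_of T => complex.Re (f g)) +i*
   Rintegral mu setT (fun g : borel_of T => complex.Im (f g)))%C.

Definition fourier (R : realType) (T : ptopologicalType)
    (mu : {measure set (borel_of T) -> \bar R}) (n : nat) (p : T -> 'M[R[i]]_n)
    : 'M[R[i]]_n :=
  \matrix_(j, k) cintegral mu (fun g => p g j k).

Definition B_feasible (R : realType) (T : ptopologicalType) (m : nat)
    (d : 'I_m.+1 -> nat) (pi : forall i : 'I_m.+1, T -> 'M[R[i]]_(d i))
    (A : set T) : set R :=
  [set r : R | exists X : forall i : 'I_m.+1, 'M[R[i]]_(d i),
     [/\ (forall i : 'I_m.+1, i != ord0 -> psd (X i)),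
         (forall g, ~ A g ->
            1 + \sum_(i < m.+1 | i != ord0) \tr (pi i g *m (X i)^T) <= 0) &
         1 + \sum_(i < m.+1 | i != ord0) \tr (X i) = (r%:C)%C]].

Definition Bbound (R : realType) (T : ptopologicalType) (m : nat)
    (d : 'I_m.+1 -> nat) (pi : forall i : 'I_m.+1, T -> 'M[R[i]]_(d i))
    (A : set T) : \bar R :=
  ereal_inf [set r%:E | r in B_feasible pi A].

(* For feasible X_1, ..., X_m, the continuous
   function F(g) = 1 + sum_i tr(pi_i(g) X_i^T) has nonpositive real part on A^c.
   The open set {Re F > 0} misses the closure of A^c, hence the support of mu,
   so it is mu-null by compactness and Re(1 + sum_i tr(mu^(pi_i) X_i^T)) <= 0.
   Since mu^(pi_i) + cI and X_i^T are positive semidefinite, the trace of their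
   product is nonnegative: Re tr(mu^(pi_i) X_i^T) >= -c tr X_i.  Hence
   1 - c sum_i tr X_i <= 0, i.e. the objective 1 + sum_i tr X_i is >= 1 + 1/c. *)

From HB Require Import structures.
From mathcomp Require Import all_boot all_order all_algebra.
From mathcomp Require Import all_classical all_reals all_analysis.
From mathcomp Require Import measurable_realfun.
From mathcomp.real_closed Require Import complex.
From mathcomp Require Import lra.
Import Order.TTheory GRing.Theory Num.Theory numFieldNormedType.Exports.
Local Open Scope ring_scope.
Local Open Scope classical_set_scope.
Set Implicit Arguments. Unset Strict Implicit. Unset Printing Implicit Defensive.

Lemma complex_ReM (R : rcfType) (z w : R[i]) :
  complex.Re (z * w) = complex.Re z * complex.Re w - complex.Im z * complex.Im w.
Proof. by case: z; case: w. Qed.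

Lemma complex_ImM (R : rcfType) (z w : R[i]) :
  complex.Im (z * w) = complex.Re z * complex.Im w + complex.Im z * complex.Re w.
Proof. by case: z; case: w. Qed.

Section PsdMatrices.
Variable R : rcfType.

Lemma conjC_complexE (x : R[i]) : Num.conj x = (x^*)%C.
Proof.
rewrite {1}[x]Crect rmorphD rmorphM /= conjCi !conj_Creal ?Creal_Re ?Creal_Im //.
rewrite -complexRe -complexIm -complexiE.
by case: x => a b /=; apply/eqP; rewrite eq_complex /=; simpc.
Qed.

Lemma adjmxE m n (M : 'M[R[i]]_(m, n)) : adjmx M = (M ^t* )%sesqui.
Proof. by apply/matrixP => i j; rewrite !mxE conjC_complexE. Qed.

Lemma psd_congr_diag_ge0 n (N : 'M[R[i]]_n) :
  psd N -> forall (P : 'M[R[i]]_n) k, 0 <= (P *m N *m (P ^t* )%sesqui) k k.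
Proof.
move=> [_ psdN] P k.
suff <- : (row k P *m N *m adjmx (row k P)) 0 0 = (P *m N *m (P ^t* )%sesqui) k k.
  exact: psdN.
rewrite !mxE.
apply: eq_bigr => l _; rewrite !mxE conjC_complexE; congr (_ * _).
by apply: eq_bigr => j _; rewrite !mxE.
Qed.

Lemma psd_trmx n (Y : 'M[R[i]]_n) : psd Y -> psd Y^T.
Proof.
move=> [Yh Ypos]; split; first by rewrite /adjmx map_trmx trmxK -[in RHS]Yh /adjmx trmxK.
move=> v; set S := v *m Y^T *m adjmx v.
have -> : S 0 0 = S^T 0 0 by rewrite [RHS]mxE.
suff -> : S^T = map_mx (@conjc R) v *m Y *m adjmx (map_mx (@conjc R) v).
  exact: Ypos.
rewrite /S !trmx_mul trmxK mulmxA.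
by congr (_ *m _ *m _); apply/matrixP => a b; rewrite !mxE ?conjcK.
Qed.

(* With Q = P' D P a unitary diagonalization (P' the adjoint of P),
   tr(M Q) = sum_k D_kk (P M P')_kk is a sum of products of nonnegative reals. *)
Lemma psd_mxtrace_mul_ge0 n (M Q : 'M[R[i]]_n) :
  psd M -> psd Q -> 0 <= \tr (M *m Q).
Proof.
move=> psdM psdQ.
have Qh : (Q ^t* )%sesqui = Q by rewrite -adjmxE; case: psdQ.
have /orthomx_spectralP QE : Q \is normalmx by apply/eqP; rewrite Qh.
set P := spectralmx Q in QE; set D := spectral_diag Q in QE.
have Pu : P \is unitarymx by exact: spectral_unitarymx.
have PPt : P *m (P ^t* )%sesqui = 1%:M by apply/unitarymxP.
rewrite invmx_unitary // in QE.
have D_ge0 k : 0 <= D 0 k.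
  have := psd_congr_diag_ge0 psdQ P k.
  by rewrite {1}QE !mulmxA PPt mul1mx -mulmxA PPt mulmx1 mxE eqxx mulr1n.
rewrite QE !mulmxA mxtrace_mulC !mulmxA /mxtrace; apply: sumr_ge0 => k _.
by rewrite mul_mx_diag mxE mulr_ge0 ?(psd_congr_diag_ge0 psdM).
Qed.

Lemma Re_mxtrace_mul_psd_shift n (M Y : 'M[R[i]]_n) (c : R) :
  psd (M + (c%:C)%C%:M) -> psd Y ->
  - c * complex.Re (\tr Y) <= complex.Re (\tr (M *m Y^T)).
Proof.
move=> psdMc psdY; have := psd_mxtrace_mul_ge0 psdMc (psd_trmx psdY).
rewrite mulmxDl mxtraceD mul_scalar_mx mxtraceZ mxtrace_tr lecE => /andP[_].
rewrite raddfD /= complex_ReM /= mul0r subr0; lra.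
Qed.

End PsdMatrices.

Section ComplexIntegral.
Context {R : realType} {T : ptopologicalType}.

(* R[i] carries no topology here; this is the continuity notion of unitary_rep. *)
Definition ccontinuous (f : T -> R[i]) :=
  continuous (fun x => complex.Re (f x)) /\ continuous (fun x => complex.Im (f x)).

Lemma ccontinuous_cst (a : R[i]) : ccontinuous (fun _ : T => a).
Proof. by split; exact: cst_continuous. Qed.

Lemma ccontinuousD (f g : T -> R[i]) :
  ccontinuous f -> ccontinuous g -> ccontinuous (fun x => f x + g x).
Proof.
move=> [fRe fIm] [gRe gIm]; split=> x; under eq_fun do rewrite raddfD /=.
  exact: (continuousD (fRe x) (gRe x)).
exact: (continuousD (fIm x) (gIm x)).
Qed.

Lemma ccontinuousMr (f : T -> R[i]) (a : R[i]) :
  ccontinuous f -> ccontinuous (fun x => f x * a).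
Proof.
move=> [fRe fIm]; split=> x; have ac (r : R) := @cst_continuous T _ r x.
  under eq_fun do rewrite complex_ReM.
  exact: (continuousB (continuousM (fRe x) (ac _)) (continuousM (fIm x) (ac _))).
under eq_fun do rewrite complex_ImM.
exact: (continuousD (continuousM (fRe x) (ac _)) (continuousM (fIm x) (ac _))).
Qed.

Lemma ccontinuous_sum (I : Type) (s : seq I) (P : pred I) (F : I -> T -> R[i]) :
  (forall i, P i -> ccontinuous (F i)) ->
  ccontinuous (fun x => \sum_(i <- s | P i) F i x).
Proof.
move=> Fc; elim: s => [|a s IHs].
  by under eq_fun do rewrite big_nil; exact: ccontinuous_cst.
under eq_fun do rewrite big_cons.
by case Pa: (P a); [exact: ccontinuousD (Fc a Pa) IHs|].
Qed.

Lemma ccontinuous_mxtrace_mulmx n (p : T -> 'M[R[i]]_n) (Y : 'M[R[i]]_n) :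
  (forall j k, ccontinuous (fun x => p x j k)) ->
  ccontinuous (fun x => \tr (p x *m Y)).
Proof.
move=> pc; have -> : (fun x => \tr (p x *m Y)) = (fun x => \sum_j \sum_k p x j k * Y k j).
  by apply/funext => x; apply: eq_bigr => j _; rewrite mxE.
by do 2!apply: ccontinuous_sum => ? _; exact: ccontinuousMr.
Qed.

Lemma continuous_borel_measurable (f : T -> R) :
  continuous f -> measurable_fun [set: borel_of T] f.
Proof.
move=> /continuousP fc; apply: (measurability _ (RGenOpens.measurableE R)).
move=> _ [_ [a [b ->]] <-]; rewrite setTI.
by apply: sub_sigma_algebra; apply: fc; exact: interval_open.
Qed.

Hypothesis T_compact : compact [set: T].
Variable mu : {finite_measure set (borel_of T) -> \bar R}.

Lemma continuous_integrable (f : T -> R) :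
  continuous f -> mu.-integrable [set: borel_of T] (EFin \o f).
Proof.
move=> fc; apply: measurable_bounded_integrable => //.
- exact: fin_num_fun_lty (fin_num_measure mu).
- exact: continuous_borel_measurable.
have [M [Mreal fM]] : bounded_set (f @` [set: T]).
  by apply/compact_bounded/continuous_compact => //; exact: continuous_subspaceT.
by exists M; split=> // y My x _; apply: (fM y My); exists x.
Qed.

Lemma cintegralD (f g : T -> R[i]) : ccontinuous f -> ccontinuous g ->
  cintegral mu (fun x => f x + g x) = cintegral mu f + cintegral mu g.
Proof.
move=> [fRe fIm] [gRe gIm]; rewrite /cintegral.
apply/eqP; rewrite eq_complex /=; apply/andP; split; apply/eqP.
  under eq_fun do rewrite raddfD /=.
  by rewrite RintegralD //; exact: continuous_integrable.
under eq_fun do rewrite raddfD /=.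
by rewrite RintegralD //; exact: continuous_integrable.
Qed.

Lemma cintegralMr (f : T -> R[i]) (a : R[i]) : ccontinuous f ->
  cintegral mu (fun x => f x * a) = cintegral mu f * a.
Proof.
move=> [fRe fIm]; rewrite /cintegral.
have intMr (h : T -> R) r : continuous h ->
    mu.-integrable [set: borel_of T] (EFin \o (fun x => h x * r)).
  move=> hc; apply: continuous_integrable => x.
  exact: (continuousM (hc x) (@cst_continuous T _ r x)).
apply/eqP; rewrite eq_complex /=; apply/andP; split; apply/eqP.
  under eq_fun do rewrite complex_ReM.
  rewrite complex_ReM RintegralB ?RintegralZr ?intMr //; exact: continuous_integrable.
under eq_fun do rewrite complex_ImM.
rewrite complex_ImM RintegralD ?RintegralZr ?intMr //; exact: continuous_integrable.
Qed.

Lemma cintegral_cst (a : R[i]) :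
  cintegral mu (fun=> a) = a * (fine (mu [set: borel_of T]))%:C%C.
Proof.
rewrite /cintegral !Rintegral_cst //.
by case: a => a1 a2 /=; apply/eqP; rewrite eq_complex /=; simpc.
Qed.

Lemma cintegral_sum (I : Type) (s : seq I) (P : pred I) (F : I -> T -> R[i]) :
  (forall i, P i -> ccontinuous (F i)) ->
  cintegral mu (fun x => \sum_(i <- s | P i) F i x) =
    \sum_(i <- s | P i) cintegral mu (F i).
Proof.
move=> Fc; elim: s => [|a s IHs].
  by under eq_fun do rewrite big_nil; rewrite big_nil cintegral_cst mul0r.
under eq_fun do rewrite big_cons; rewrite big_cons.
case Pa: (P a); last exact: IHs.
by rewrite cintegralD; [congr (_ + _); exact: IHs|exact: Fc|exact: ccontinuous_sum].
Qed.

Lemma fourier_mxtrace_mulmx n (p : T -> 'M[R[i]]_n) (Y : 'M[R[i]]_n) :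
  (forall j k, ccontinuous (fun x => p x j k)) ->
  \tr (fourier mu p *m Y) = cintegral mu (fun x => \tr (p x *m Y)).
Proof.
move=> pc; have pYc j k : ccontinuous (fun x => p x j k * Y k j).
  exact: ccontinuousMr.
have -> : (fun x => \tr (p x *m Y)) = (fun x => \sum_j \sum_k p x j k * Y k j).
  by apply/funext => x; apply: eq_bigr => j _; rewrite mxE.
rewrite cintegral_sum => [|j _]; last exact: ccontinuous_sum.
apply: eq_bigr => j _; rewrite mxE cintegral_sum //.
by apply: eq_bigr => k _; rewrite cintegralMr // mxE.
Qed.

End ComplexIntegral.

Section OutsideSupport.
Context {R : realType} {T : ptopologicalType}.
Hypothesis T_compact : compact [set: T].
Variable mu : {finite_measure set (borel_of T) -> \bar R}.

Lemma not_msupport_null_open x :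
  ~ msupport mu x -> exists2 V : set T, open V & V x /\ mu V = 0%E.
Proof.
move=> /existsNP [V /not_implyP [oV /not_implyP [Vx /negP]]].
by rewrite lt0e negb_and measure_ge0 orbF negbK => /eqP V0; exists V.
Qed.

Lemma negligible_compact_outside_msupport (K : set T) :
  compact K -> K `<=` ~` msupport mu -> mu.-negligible (K : set (borel_of T)).
Proof.
move=> Kc Kout.
have [V HV] : {V : T -> set T &
    forall x, K x -> [/\ open (V x), V x x & mu (V x) = 0%E]}.
  apply: (choice (P := fun x V => K x -> [/\ open V, V x & mu V = 0%E])) => x.
  have [Kx|nKx] := pselect (K x); last by exists set0.
  by have [W oW [Wx W0]] := not_msupport_null_open (Kout x Kx); exists W.
move: Kc; rewrite compact_cover => /(_ T K V) [x /HV[]//|x Kx|D DK KD].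
  by exists x => //; have [] := HV x Kx.
apply: (@negligibleS _ (borel_of T) _ mu _ _ KD); rewrite /cover bigcup_fset big_seq.
apply: (big_ind (fun A : set T => mu.-negligible (A : set (borel_of T)))).
- exact: negligible_set0.
- exact: (@negligibleU _ (borel_of T) _ mu).
move=> x /DK; rewrite inE => /HV [oV _ V0].
by apply/negligibleP => //; exact: sub_sigma_algebra.
Qed.

(* {h > 0} is the union of the compact sets {h >= 1/(n+1)}. *)
Lemma negligible_gt0_outside_msupport (h : T -> R) : continuous h ->
  [set x | 0 < h x] `<=` ~` msupport mu ->
  mu.-negligible ([set x | 0 < h x] : set (borel_of T)).
Proof.
move=> hc Nout; pose K n := h @^-1` [set y | n.+1%:R^-1 <= y].
have hclosed A : closed A -> closed (h @^-1` A) := (continuous_closedP h).1 hc A.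
have KN n : K n `<=` [set x | 0 < h x].
  by move=> x; apply: lt_le_trans; rewrite invr_gt0.
have Knegl n : mu.-negligible (K n : set (borel_of T)).
  apply: negligible_compact_outside_msupport; last exact: subset_trans (KN n) Nout.
  apply: (subclosed_compact _ T_compact) => //.
  by apply: hclosed; exact: closed_ge.
apply: negligibleS (negligible_bigcup Knegl) => x /= hx_gt0.
exists (Num.truncn (h x)^-1) => //; rewrite /K /=.
have hV_lt := truncnS_gt (h x)^-1.
by rewrite -[X in _ <= X]invrK lef_pV2 ?posrE ?invr_gt0 ?ltr0Sn // ltW.
Qed.

(* {h > 0} is open and misses closure B, hence the support, so it is null. *)
Lemma Rintegral_le0_outside_msupport (h : T -> R) (B : set T) : continuous h ->
  msupport mu `<=` closure B -> (forall x, B x -> h x <= 0) ->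
  Rintegral mu [set: borel_of T] h <= 0.
Proof.
move=> hc suppB hB; pose N := h @^-1` [set y | 0 < y].
have N_open : open N by have := (continuousP h).1 hc; apply; exact: open_gt.
have mN : measurable (N : set (borel_of T)) by exact: sub_sigma_algebra.
have closureB_le0 : closure B `<=` ~` N.
  rewrite closureE; apply: smallest_sub; first exact: open_closedC.
  by move=> x /hB; rewrite /N /= leNgt => /negP.
have muN : mu N = 0%E.
  apply/negligibleP => //; apply: negligible_gt0_outside_msupport => //.
  by move=> x Nx /suppB /closureB_le0.
have h_int := continuous_integrable T_compact mu hc.
rewrite /Rintegral (negligible_integral mN measurableT h_int muN) -/(Rintegral _ _ _).
have mNC : measurable ([set: borel_of T] `\` N) := measurableD measurableT mN.
apply: (le_trans (le_Rintegral (f2 := fun=> 0) mNC _ _ _)).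
- exact: integrableS h_int.
- exact: integrableS (continuous_integrable T_compact mu (@cst_continuous T _ 0)).
- by move=> x [_ Nx]; rewrite leNgt; apply/negP.
by rewrite Rintegral_cst // mul0r.
Qed.

End OutsideSupport.

Section FourierFeasible.
Context {R : realType} {T : ptopologicalType}.
Hypothesis T_compact : compact [set: T].
Variable mu : probability (borel_of T) R.

Lemma Re_fourier_mxtrace_le0 (I : Type) (s : seq I) (P : pred I) (d : I -> nat)
    (p : forall i, T -> 'M[R[i]]_(d i)) (X : forall i, 'M[R[i]]_(d i)) (B : set T) :
  (forall i j k, ccontinuous (fun g => p i g j k)) ->
  msupport mu `<=` closure B ->
  (forall g, B g -> complex.Re (1 + \sum_(i <- s | P i) \tr (p i g *m X i)) <= 0) ->
  complex.Re (1 + \sum_(i <- s | P i) \tr (fourier mu (p i) *m X i)) <= 0.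
Proof.
move=> p_cont suppB F_le0.
have tr_cont i : ccontinuous (fun g => \tr (p i g *m X i)).
  exact: ccontinuous_mxtrace_mulmx.
have sum_cont : ccontinuous (fun g => \sum_(i <- s | P i) \tr (p i g *m X i)).
  by apply: ccontinuous_sum => i _; exact: tr_cont.
have mu1 : fine (mu [set: borel_of T]) = 1 by rewrite probability_setT.
have -> : 1 + \sum_(i <- s | P i) \tr (fourier mu (p i) *m X i) =
    cintegral mu (fun g => 1 + \sum_(i <- s | P i) \tr (p i g *m X i)).
  rewrite cintegralD ?cintegral_cst ?mu1 ?mul1r ?cintegral_sum //.
  - by congr (_ + _); apply: eq_bigr => i _; rewrite fourier_mxtrace_mulmx.
  - exact: ccontinuous_cst.
have F_cont := ccontinuousD (ccontinuous_cst 1) sum_cont.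
exact: (Rintegral_le0_outside_msupport T_compact F_cont.1 suppB).
Qed.

End FourierFeasible.

Theorem lemma2p5 (R : realType) (T : ptopologicalType)
    (mul : T -> T -> T) (inv : T -> T) (e : T)
    (A : set T) (m : nat) (d : 'I_m.+1 -> nat)
    (pi : forall i : 'I_m.+1, T -> 'M[R[i]]_(d i))
    (mu : probability (borel_of T) R) (c : R) :
  compact_group mul inv e ->
  (forall g, A (inv g) <-> A g) ->
  A e ->
  (forall i, unitary_rep mul (pi i)) ->
  (forall i, irreducible_rep (pi i)) ->
  (forall i j : 'I_m.+1, i != j -> ~ rep_iso (pi i) (pi j)) ->
  d ord0 = 1%N ->
  (forall g, pi ord0 g = 1%:M) ->
  msupport mu `<=` closure (~` A) ->
  0 < c ->
  (forall i : 'I_m.+1, i != ord0 -> psd (fourier mu (pi i) + ((c%:C)%C)%:M)) ->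
  ((1 + c^-1)%:E <= Bbound pi A)%E.
Proof.
move=> [_ [_ _ _ T_compact]] _ _ pi_unitary _ _ _ _ supp_mu c_gt0 fourier_shift_psd.
apply/ereal_infP => _ [r [X [X_psd X_feasible X_value]] <-]; rewrite lee_fin.
have pi_cont i j k : ccontinuous (fun g => pi i g j k).
  by have [_ _ /(_ j k)] := pi_unitary i.
have sum_upper : 1 + \sum_(i < m.+1 | i != ord0)
    complex.Re (\tr (fourier mu (pi i) *m (X i)^T)) <= 0.
  have := Re_fourier_mxtrace_le0 T_compact (s := index_enum 'I_m.+1)
    (P := fun i => i != ord0) (X := fun i => (X i)^T) pi_cont supp_mu.
  rewrite raddfD raddf_sum /=; apply=> g /X_feasible.
  by rewrite lecE => /andP[].
have r_value : r = 1 + \sum_(i < m.+1 | i != ord0) complex.Re (\tr (X i)).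
  by have := congr1 (@complex.Re R) X_value; rewrite raddfD raddf_sum.
have sum_lower : - c * (r - 1) <=
    \sum_(i < m.+1 | i != ord0) complex.Re (\tr (fourier mu (pi i) *m (X i)^T)).
  rewrite r_value addrC addKr mulr_sumr; apply: ler_sum => i i0.
  exact: Re_mxtrace_mul_psd_shift (fourier_shift_psd i i0) (X_psd i i0).
rewrite -(ler_pM2l c_gt0) mulrDr mulfV ?gt_eqF //.
move: sum_lower; rewrite mulNr mulrBr mulr1; lra.
Qed.
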